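(* Let $(X,\overline p)$ be a perverse space and let $x\in X$ be an isolated singular point, i.e. $\{x\}$ is a singular stratum of $X$. Set $\ell=D\overline p(\{x\})+1$, and let $X\setminus\{x\}$ carry the induced filtration and perversity. Then the $\ell$-skeleta of $\mathscr G_{\overline p}X$ and $\mathscr G_{\overline p}(X\setminus\{x\})$ are isomorphic.
   Context: Filtered spaces. A filtered space of formal dimension $n$ is a nonempty space $X$ with closed subsets $\emptyset=X_{-1}\subseteq\cdots\subseteq X_{n-1}\subsetneq X_n=X$. Strata are the nonempty connected components of $X_i\setminus X_{i-1}$, with codimension $n-i$. Strata in $X\setminus X_{n-1}$ are regular. An open subset $U$ has the induced filtration $U\cap X_i$ and the induced perversity, namely the value of $\overline p$ on the stratum of $X$ containing a given stratum of $U$. Perversities. A perversity is a map $\overline p$ from strata to $\mathbb Z\cup\{\pm\infty\}$ vanishing on regular strata. The top perversity is $\overline t(S)=\operatorname{codim}S-2$, and $D\overline p=\overline t-\overline p$. Full simplices and the Gajer space. A simplex $\sigma\colon\Delta^j\to X$ is $\overline p$-allowable if $\dim\sigma^{-1}S\le j-\operatorname{codim}S+\overline p(S)$ for every singular stratum $S$. Here $\dim$ is polyhedral dimension, with $\dim\emptyset=-\infty$. A simplex is $\overline p$-full if it and all its iterated faces are allowable. $\mathscr G_{\overline p}X\subseteq\mathrm{Sing}\,X$ is the simplicial set of $\overline p$-full simplices. *)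

From HB Require Import structures.
From mathcomp Require Import all_boot all_order all_algebra.
From mathcomp Require Import all_classical all_reals all_analysis.
From mathcomp Require Import Rstruct Rstruct_topology.

Set Implicit Arguments.
Unset Strict Implicit.
Unset Printing Implicit Defensive.

Import Order.TTheory GRing.Theory Num.Theory.
Local Open Scope classical_set_scope.
Local Open Scope ring_scope.

Notation RR := Rdefinitions.R.

Inductive eint := EINeg | EIFin of int | EIPos.

Definition eadd (a b : eint) : eint :=
  match a, b with
  | EIFin x, EIFin y => EIFin (x + y)
  | EIPos, EINeg | EINeg, EIPos => EIFin 0 (* never used *)
  | EIPos, _ | _, EIPos => EIPos
  | EINeg, _ | _, EINeg => EINeg
  end.

Definition eopp (a : eint) : eint :=
  match a with EINeg => EIPos | EIFin x => EIFin (- x) | EIPos => EINeg end.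

Definition nat_le_eint (j : nat) (l : eint) : Prop :=
  match l with EINeg => False | EIFin z => (j%:Z <= z) | EIPos => True end.

Section Filtered.
Variables (X : topologicalType) (n : nat) (F : nat -> set X).
(* F i stands for X_i (0 <= i <= n); X_{-1} is the empty set. *)

Definition Fprev (i : nat) : set X := if i is i'.+1 then F i' else set0.

Definition filtered_space : Prop :=
  [/\ (exists y : X, True),
      (forall i, (i <= n)%N -> closed (F i)),
      (forall i, (i < n)%N -> F i `<=` F i.+1),
      F n = setT &
      Fprev n != setT].

Definition piece (i : nat) : set X := F i `\` Fprev i.

(** S is a stratum of formal level i (codimension n - i) *)
Definition is_stratum_at (i : nat) (S : set X) : Prop :=
  (i <= n)%N /\ exists2 y, piece i y & S = connected_component (piece i) y.

Definition is_stratum (S : set X) : Prop := exists i, is_stratum_at i S.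

(** perversity: vanishes on regular strata (values on non-strata irrelevant) *)
Definition perversity (p : set X -> eint) : Prop :=
  forall S, is_stratum_at n S -> p S = EIFin 0.

(** value of the top perversity and of D p on a stratum of codimension n - i *)
Definition top_perv_at (i : nat) : eint := EIFin (n%:Z - i%:Z - 2).
Definition dual_perv_at (p : set X -> eint) (i : nat) (S : set X) : eint :=
  eadd (top_perv_at i) (eopp (p S)).
End Filtered.

Definition induced_filt (X : topologicalType) (A : set X) (F : nat -> set X)
  : nat -> set (set_type A) := fun i => set_val @^-1` F i.

Definition induced_perv (X : topologicalType) (n : nat) (F : nat -> set X)
  (A : set X) (p : set X -> eint) : set (set_type A) -> eint :=
  fun S => p (xget set0 [set S' : set X | is_stratum n F S' /\ set_val @` S `<=` S']).

Arguments induced_filt {X} A F _ _.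
Arguments induced_perv {X} n F A p _.

Definition stdsimplex (j : nat) : set 'rV[RR]_(j.+1) :=
  [set v | (forall b, 0 <= v 0 b) /\ \sum_b v 0 b = 1].
Arguments stdsimplex : clear implicits.

(** the affine map Δ^k -> Δ^j sending vertex e_a to e_(f a) *)
Definition simp_op_row k j (f : 'I_(k.+1) -> 'I_(j.+1)) (v : 'rV[RR]_(k.+1))
  : 'rV[RR]_(j.+1) := \row_b \sum_(a | f a == b) v 0 a.

Lemma simp_op_in k j (f : 'I_(k.+1) -> 'I_(j.+1)) (v : set_type (stdsimplex k)) :
  simp_op_row f (set_val v) \in stdsimplex j.
Proof.
apply: mem_set; have [v0 v1] : stdsimplex k (set_val v) by case: v => w /= wP; exact: set_mem wP.
split.
  by move=> b; rewrite mxE; apply: sumr_ge0 => a _.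
rewrite -v1 [RHS](partition_big f xpredT) //=.
by apply: eq_bigr => b _; rewrite mxE.
Qed.

Definition simp_op k j (f : 'I_(k.+1) -> 'I_(j.+1))
  : set_type (stdsimplex k) -> set_type (stdsimplex j) :=
  fun v => SigSub (simp_op_in f v).

Definition coface j (i : 'I_(j.+2)) : 'I_(j.+1) -> 'I_(j.+2) := lift i.
Definition codegen j (i : 'I_(j.+1)) : 'I_(j.+2) -> 'I_(j.+1) :=
  fun a => inord (if (a <= i)%N then nat_of_ord a else (nat_of_ord a).-1).

Definition sface (Y : Type) j (i : 'I_(j.+2)) (s : set_type (stdsimplex j.+1) -> Y)
  : set_type (stdsimplex j) -> Y := s \o simp_op (coface i).
Definition sdegen (Y : Type) j (i : 'I_(j.+1)) (s : set_type (stdsimplex j) -> Y)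
  : set_type (stdsimplex j.+1) -> Y := s \o simp_op (codegen i).

Definition conv_hull m (t : seq 'rV[RR]_m) : set 'rV[RR]_m :=
  [set v | exists c : 'I_(size t) -> RR,
     [/\ forall a, 0 <= c a, \sum_a c a = 1 & v = \sum_a c a *: t`_a]].

(** polyhedral dimension of A is <= k: A is contained in a (compact) polyhedron
    of dimension <= k, i.e. in a finite union of convex hulls of at most
    k+1 points.  For k < 0 this forces A = set0 (dim set0 = -oo). *)
Definition polydim_le m (A : set 'rV[RR]_m) (k : int) : Prop :=
  exists s : seq (seq 'rV[RR]_m),
    (forall t, t \in s -> (size t)%:Z <= k + 1) /\
    A `<=` \bigcup_(t in [set t | t \in s]) conv_hull t.

Section Gajer.
Variables (X : topologicalType) (n : nat) (F : nat -> set X) (p : set X -> eint).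

Definition dim_bound j (s : set_type (stdsimplex j) -> X) (i : nat) (S : set X) : Prop :=
  let P := set_val @` (s @^-1` S) in
  match p S with
  | EINeg => P = set0
  | EIFin q => polydim_le P (j%:Z - (n%:Z - i%:Z) + q)
  | EIPos => True
  end.

Definition allowable j (s : set_type (stdsimplex j) -> X) : Prop :=
  forall i S, (i < n)%N -> is_stratum_at n F i S -> dim_bound s i S.

(** s and all its iterated faces are allowable: faces of Δ^j correspond to
    strictly increasing maps [k] -> [j] *)
Definition full j (s : set_type (stdsimplex j) -> X) : Prop :=
  forall k (f : 'I_(k.+1) -> 'I_(j.+1)),
    (forall a b : 'I_(k.+1), (a < b)%N -> (f a < f b)%N) -> allowable (s \o simp_op f).

Definition Gajer j : set (set_type (stdsimplex j) -> X) :=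
  [set s | continuous s /\ full s].
End Gajer.
Arguments Gajer {X} n F p j.

(** * Skeleta and isomorphisms of simplicial sets
    K is a simplicial subset of Sing Y (closed under faces and degeneracies). *)
Fixpoint skel (Y : Type) (K : forall j, set (set_type (stdsimplex j) -> Y)) (l : eint)
  (j : nat) : set (set_type (stdsimplex j) -> Y) :=
  fun s => K j s /\
    (nat_le_eint j l \/
     match j return (set_type (stdsimplex j) -> Y) -> Prop with
     | 0 => fun _ => False
     | j'.+1 => fun s => exists (i : 'I_(j'.+1)) t, @skel Y K l j' t /\ s = sdegen i t
     end s).
Arguments skel {Y} K l j.

Definition skel_iso (Y Z : Type) (K : forall j, set (set_type (stdsimplex j) -> Y))
  (L : forall j, set (set_type (stdsimplex j) -> Z)) (l : eint) : Prop :=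
  exists phi : forall j, (set_type (stdsimplex j) -> Y) -> (set_type (stdsimplex j) -> Z),
   [/\ (forall j s, skel K l j s -> skel L l j (phi j s)),
       (forall j s t, skel K l j s -> skel K l j t -> phi j s = phi j t -> s = t),
       (forall j t, skel L l j t -> exists2 s, skel K l j s & phi j s = t),
       (forall j (i : 'I_(j.+2)) s, skel K l j.+1 s ->
            phi j (sface i s) = sface i (phi j.+1 s)) &
       (forall j (i : 'I_(j.+1)) s, skel K l j s ->
            phi j.+1 (sdegen i s) = sdegen i (phi j s))].

(* A simplex in G_p X is allowable for the singular stratum T = {x}, so the
   preimage of x has polyhedral dimension at most j - codim T + p(T), which is
   negative when j <= l = Dp(T) + 1: simplices of dimension at most l, and
   hence all their degeneracies, miss x.  On the other side, no stratum other
   than T meets T, so the strata of X \ T are exactly the strata of X other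
   than T, and a simplex of X \ T is full exactly when it is full in X.  Hence
   corestriction to X \ T is an isomorphism of l-skeleta. *)

From HB Require Import structures.
From mathcomp Require Import all_boot all_order all_algebra.
From mathcomp Require Import all_classical all_reals all_analysis.
From mathcomp Require Import Rstruct Rstruct_topology.
From mathcomp Require Import zify.
Local Open Scope classical_set_scope.
Local Open Scope ring_scope.
Set Implicit Arguments.
Unset Strict Implicit.
Unset Printing Implicit Defensive.
Import Order.TTheory GRing.Theory Num.Theory.

Local Notation simplex j Y := (set_type (stdsimplex j) -> Y).

Section SetTypeTopology.
Context {X : topologicalType} (A : set X).

Lemma set_val_continuous : continuous (@set_val X A).
Proof. exact: initial_continuous. Qed.

Lemma set_val_inj : injective (@set_val X A).
Proof. by move=> u w; rewrite set_valE => /val_inj. Qed.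

Lemma continuous_set_valP {Y : topologicalType} (t : Y -> set_type A) :
  continuous t <-> continuous (set_val \o t).
Proof.
split=> [ct y|]; last exact: continuous_comp_initial.
by apply: continuous_comp; [exact: ct | exact: set_val_continuous].
Qed.

Lemma range_set_val : range (@set_val X A) = A.
Proof.
apply/seteqP; split=> [_ [u _ <-]|y Ay]; first exact: set_valP.
by exists (SigSub (mem_set Ay)).
Qed.

Lemma image_preimage_set_val (D : set X) :
  D `<=` A -> set_val @` (set_val @^-1` D : set (set_type A)) = D.
Proof.
move=> DA; apply/seteqP; split=> [|y Dy]; first exact: image_preimage_subset.
by exists (SigSub (mem_set (DA y Dy))).
Qed.

Lemma connected_image_set_val (C : set (set_type A)) :
  connected C -> connected (set_val @` C).
Proof.
move=> cC; apply: connected_continuous_connected => //.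
exact/continuous_subspaceT/set_val_continuous.
Qed.

Lemma connected_preimage_set_val (D : set X) : D `<=` A -> connected D ->
  connected (set_val @^-1` D : set (set_type A)).
Proof.
move=> DA cD; have [->|/set0P [d Dd]] := eqVneq D set0.
  by rewrite preimage_set0; exact: connected0.
pose a0 : set_type A := SigSub (mem_set (DA d Dd)).
have valLE (u : set_type A) : valL_ a0 id (set_val u) = u.
  by have /(congr1 (fun g => g u)) := valLK a0 (@id (set_type A)).
suff -> : set_val @^-1` D = valL_ a0 id @` D.
  apply: connected_continuous_connected => //.
  apply: (continuous_subspaceW DA).
  have id_cont : continuous (@id (set_type A)) by move=> u; exact: cvg_id.
  exact: (subspace_valL_continuousP' A a0 id).2 id_cont.
apply/seteqP; split=> [u Du|_ [y Dy <-]]; first by exists (set_val u); rewrite // valLE.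
by rewrite /preimage -[y]/(set_val (SigSub (mem_set (DA y Dy)))) valLE.
Qed.

Lemma connected_component_preimage_set_val (B : set X) (u : set_type A) :
  connected_component B (set_val u) `<=` A ->
  connected_component (set_val @^-1` B) u =
    set_val @^-1` connected_component B (set_val u).
Proof.
move=> compA; apply/seteqP; split=> [w [C [Cu CB cC] Cw]|w compw].
  apply: (connected_component_max (B := set_val @` C)).
  - by exists u.
  - by move=> _ [c Cc <-]; exact: CB.
  - exact: connected_image_set_val.
  - by exists w.
have Bu : B (set_val u).
  by apply: contrapT => nBu; move: compw; rewrite /preimage connected_component_out.
exists (set_val @^-1` connected_component B (set_val u)) => //; split.
- exact: connected_component_refl.
- by move=> v; apply: connected_component_sub.
- exact/connected_preimage_set_val/component_connected.
Qed.
End SetTypeTopology.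

Section Filtration.
Variables (X : topologicalType) (n : nat) (F : nat -> set X).
Hypothesis hF : filtered_space n F.

Lemma filtration_mono a b : (a <= b)%N -> (b <= n)%N -> F a `<=` F b.
Proof.
case: hF => _ _ incF _ _.
elim: b => [|b IH]; first by rewrite leqn0 => /eqP -> _.
rewrite leq_eqVlt ltnS => /orP[/eqP -> _ //|ab bn].
exact: subset_trans (IH ab (ltnW bn)) (incF b bn).
Qed.

Lemma piece_level_uniq a b z : (a <= n)%N -> (b <= n)%N ->
  piece F a z -> piece F b z -> a = b.
Proof.
wlog ab : a b / (a <= b)%N => [wl an bn pa pb|an bn [Fa _] [_ nFb]].
  by case/orP: (leq_total a b) => h; [exact: wl|apply/esym; exact: wl].
case: b bn ab nFb => [|b] bn ab nFb; first by apply/eqP; rewrite -leqn0.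
move: ab; rewrite leq_eqVlt ltnS => /orP[/eqP //|ab].
by case: nFb; exact: filtration_mono ab (ltnW bn) _ Fa.
Qed.

Lemma stratum_sub_piece a S : is_stratum_at n F a S -> S `<=` piece F a.
Proof. by case=> _ [y _ ->]; exact: connected_component_sub. Qed.

Lemma eq_stratum a b S T z : is_stratum_at n F a S -> is_stratum_at n F b T ->
  S z -> T z -> S = T.
Proof.
move=> sS sT Sz Tz.
have ab := piece_level_uniq (proj1 sS) (proj1 sT)
  (stratum_sub_piece sS Sz) (stratum_sub_piece sT Tz).
case: sS sT Sz Tz; rewrite ab => _ [y _ ->] [_ [y' _ ->]] Sz Tz.
by rewrite (same_connected_component Sz) (same_connected_component Tz).
Qed.

Lemma exists_regular_point : exists y, forall a, (a < n)%N -> ~ F a y.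
Proof.
case: hF => _ _ _ _ /eqP prevN.
have [y ny] : exists y, ~ Fprev F n y.
  apply: contrapT => /forallNP prevT; apply: prevN.
  by apply/seteqP; split=> // y _; exact: contrapT.
exists y => a an Fay; apply: ny.
have -> : Fprev F n = F n.-1 by rewrite -(prednK (leq_ltn_trans (leq0n a) an)).
have a_le : (a <= n.-1)%N by lia.
exact: filtration_mono a_le (leq_pred n) _ Fay.
Qed.

End Filtration.

Lemma polydim_le_lt0 m (A : set 'rV[RR]_m) k : k < 0 -> polydim_le A k -> A = set0.
Proof.
move=> k_lt0 [s [size_s cover]].
apply/seteqP; split=> // v /cover [t ts [c [_ c1 _]]].
case: t ts c c1 => [|w t] ts c c1.
  by move: c1; rewrite big_ord0 => /eqP; rewrite eq_sym oner_eq0.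
by have := size_s _ ts; rewrite /=; lia.
Qed.

Lemma simp_op_id j (v : set_type (stdsimplex j)) : simp_op id v = v.
Proof. by apply/val_inj/rowP => b; rewrite mxE big_pred1_eq. Qed.

Section Allowability.
Variables (X : topologicalType) (n : nat) (F : nat -> set X) (p : set X -> eint).

Lemma dim_bound_disjoint j (s : simplex j X) a S :
  (forall v, ~ S (s v)) -> dim_bound n p s a S.
Proof.
move=> sS; rewrite /dim_bound /=; have -> : set_val @` (s @^-1` S) = set0.
  by apply/seteqP; split=> // z [v Ssv _]; case: (sS v Ssv).
by case: (p S) => // k; exists [::]; split=> // z [].
Qed.

Lemma full_allowable j (s : simplex j X) :
  full n F p s -> allowable n F p s.
Proof.
move=> /(_ j id (fun a b ab => ab)).
by have -> : s \o simp_op id = s by apply: funext => v /=; rewrite simp_op_id.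
Qed.

Lemma allowable_avoids_stratum j (s : simplex j X) a S :
  (a < n)%N -> is_stratum_at n F a S ->
  nat_le_eint j (eadd (dual_perv_at n p a S) (EIFin 1)) ->
  allowable n F p s -> forall v, ~ S (s v).
Proof.
move=> an sS low /(_ a S an sS) + v Ssv.
have Pv : (set_val @` (s @^-1` S)) (set_val v) by exists v.
move: low; rewrite /dim_bound /dual_perv_at /top_perv_at /=.
case: (p S) => [|q|] //= low bound; first by rewrite bound in Pv.
by move: Pv; rewrite (polydim_le_lt0 _ bound) //; lia.
Qed.

End Allowability.

Lemma piece_induced_filt (X : topologicalType) (A : set X) (F : nat -> set X) k :
  piece (induced_filt A F) k = set_val @^-1` piece F k.
Proof. by case: k => [|k]; rewrite /piece /= ?preimage_setD ?preimage_set0. Qed.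

Section SaturatedSubspace.
Variables (X : topologicalType) (n : nat) (F : nat -> set X) (p : set X -> eint).
Variable A : set X.
Hypothesis hF : filtered_space n F.
Hypothesis A_saturated :
  forall a S y, is_stratum_at n F a S -> S y -> A y -> S `<=` A.

Local Notation FA := (induced_filt A F).
Local Notation pA := (induced_perv n F A p).

Lemma induced_stratum_of_stratum a S :
  is_stratum_at n F a S -> S `<=` A -> is_stratum_at n FA a (set_val @^-1` S).
Proof.
case=> an [y py ->] compA; split=> //.
have Ay := compA y (connected_component_refl py).
exists (SigSub (mem_set Ay)); rewrite piece_induced_filt //.
by rewrite connected_component_preimage_set_val.
Qed.

Lemma stratum_of_induced_stratum a S : is_stratum_at n FA a S ->
  is_stratum_at n F a (set_val @` S) /\ S = set_val @^-1` (set_val @` S).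
Proof.
case=> an [u pu ->]; rewrite piece_induced_filt in pu *.
have sX : is_stratum_at n F a (connected_component (piece F a) (set_val u)).
  by split=> //; exists (set_val u).
have compA := A_saturated sX
  (@connected_component_refl _ _ (set_val u) pu) (set_valP u).
by rewrite connected_component_preimage_set_val // image_preimage_set_val.
Qed.

Lemma induced_perv_stratum a S :
  is_stratum_at n FA a S -> pA S = p (set_val @` S).
Proof.
move=> sS; have [sX _] := stratum_of_induced_stratum sS.
have [u Su] : exists u, S u.
  by case: sS => _ [u pu ->]; exists u; exact: connected_component_refl.
rewrite /induced_perv; set P := [set S' | _].
have [[b sb] sub] : P (xget set0 P).
  by apply: xgetPex; exists (set_val @` S); split=> //; exists a.
by rewrite (eq_stratum hF sb sX (sub _ (imageP _ Su)) (imageP _ Su)).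
Qed.

Lemma dim_bound_induced j (t : simplex j (set_type A)) a S :
  is_stratum_at n FA a S ->
  dim_bound n pA t a S <-> dim_bound n p (set_val \o t) a (set_val @` S).
Proof.
move=> sS; have [_ eS] := stratum_of_induced_stratum sS.
by rewrite /dim_bound /= (induced_perv_stratum sS) comp_preimage -eS.
Qed.

Lemma allowable_induced j (t : simplex j (set_type A)) :
  allowable n FA pA t <-> allowable n F p (set_val \o t).
Proof.
split=> [alt a S an sS|alt a S an sS].
  have [SA|nSA] := pselect (S `<=` A).
    have sA := induced_stratum_of_stratum sS SA.
    rewrite -(image_preimage_set_val SA).
    by apply/(dim_bound_induced t sA); exact: alt.
  apply: dim_bound_disjoint => v Stv; apply: nSA.
  exact: A_saturated sS Stv (set_valP (t v)).
have [sX _] := stratum_of_induced_stratum sS.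
by apply/(dim_bound_induced t sS); exact: (alt a _ an sX).
Qed.

Lemma Gajer_induced j (t : simplex j (set_type A)) :
  Gajer n FA pA j t <-> Gajer n F p j (set_val \o t).
Proof.
rewrite /Gajer /full /=; split=> -[ct ft]; split.
- exact/continuous_set_valP.
- by move=> k f mf; apply/allowable_induced; exact: ft.
- exact/continuous_set_valP.
- by move=> k f mf; apply/allowable_induced; exact: ft.
Qed.

End SaturatedSubspace.

Section Skeleton.
Variables (Y : Type) (K : forall j, set (simplex j Y)) (l : eint).
Arguments K : clear implicits.

Lemma skel_values (P : set Y) :
  (forall j (s : simplex j Y), K j s -> nat_le_eint j l -> forall v, P (s v)) ->
  forall j (s : simplex j Y), skel K l j s -> forall v, P (s v).
Proof.
move=> PK; elim=> [|j IH] s [Ks low] v; first by case: low => // low; exact: PK.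
case: low => [low|[k [t [st ->]]]]; first exact: PK.
exact: IH.
Qed.

Variables (Z : choiceType) (iota : Z -> Y) (z0 : Z).
Variable L : forall j, set (simplex j Z).
Arguments L : clear implicits.
Hypothesis iota_inj : injective iota.
Hypothesis L_K : forall j (t : simplex j Z), L j t <-> K j (iota \o t).
Hypothesis skel_range :
  forall j (s : simplex j Y), skel K l j s -> forall v, range iota (s v).

Definition corestrict j (s : simplex j Y) : simplex j Z :=
  fun v => xget z0 [set z | iota z = s v].

Lemma corestrictK j (s : simplex j Y) :
  (forall v, range iota (s v)) -> iota \o corestrict s = s.
Proof.
move=> s_range; apply: funext => v; rewrite /corestrict /=.
have := @xgetPex Z z0 [set z | iota z = s v]; apply.
by case: (s_range v) => z _ <-; exists z.
Qed.

Lemma corestrict_comp j (t : simplex j Z) : corestrict (iota \o t) = t.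
Proof.
apply: funext => v; apply: iota_inj; rewrite /corestrict /=.
by have := @xgetPex Z z0 [set z | iota z = iota (t v)]; apply; exists (t v).
Qed.

Lemma skel_compP j (t : simplex j Z) :
  skel L l j t <-> skel K l j (iota \o t).
Proof.
elim: j t => [|j IH] t /=.
  by split=> -[Kt low]; split=> //; apply/L_K.
split=> -[Lt low].
  split; first exact/L_K.
  case: low => [low|[k [t' [st' ->]]]]; first by left.
  by right; exists k, (iota \o t'); split=> //; apply/IH.
split; first exact/L_K.
case: low => [low|[k [s [ss e]]]]; first by left.
have sK := corestrictK (skel_range ss).
right; exists k, (corestrict s); split; first by apply/IH; rewrite sK.
apply: funext => v; apply: iota_inj.
by rewrite /sdegen /= -[LHS]/((iota \o t) v) e /= -[in LHS]sK.
Qed.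

Lemma skel_iso_corestrict : skel_iso K L l.
Proof.
exists corestrict; split=> //.
- by move=> j s ss; apply/skel_compP; rewrite corestrictK //; exact: skel_range.
- move=> j s t ss st e.
  by rewrite -(corestrictK (skel_range ss)) -(corestrictK (skel_range st)) e.
- move=> j t st; exists (iota \o t); first exact/skel_compP.
  exact: corestrict_comp.
Qed.

End Skeleton.

Section SingularStratumComplement.
Variables (X : topologicalType) (n : nat) (F : nat -> set X) (p : set X -> eint).
Variables (a : nat) (T : set X).
Hypothesis hF : filtered_space n F.
Hypothesis a_lt_n : (a < n)%N.
Hypothesis hT : is_stratum_at n F a T.

Local Notation ell := (eadd (dual_perv_at n p a T) (EIFin 1)).

Lemma setC_stratum_saturated b S y :
  is_stratum_at n F b S -> S y -> ~ T y -> S `<=` ~` T.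
Proof.
by move=> sS Sy nTy z Sz Tz; apply: nTy; rewrite -(eq_stratum hF sS hT Sz Tz).
Qed.

Lemma skel_Gajer_avoids_stratum j (s : simplex j X) :
  skel (Gajer n F p) ell j s -> forall v, ~ T (s v).
Proof.
apply: (skel_values (P := ~` T)) => k r [_ fr] low v.
exact: allowable_avoids_stratum a_lt_n hT low (full_allowable fr) v.
Qed.

Theorem skel_iso_Gajer_setC_stratum :
  skel_iso (Gajer n F p)
    (Gajer n (induced_filt (~` T) F) (induced_perv n F (~` T) p)) ell.
Proof.
have [y y_regular] := exists_regular_point hF.
have nTy : (~` T) y.
  by move=> /(stratum_sub_piece hT) [Fay _]; exact: y_regular a_lt_n Fay.
apply: (skel_iso_corestrict (SigSub (mem_set nTy)) (@set_val_inj _ (~` T))).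
- by move=> j t; apply: Gajer_induced => // b S z; exact: setC_stratum_saturated.
- by move=> j s ss v; rewrite range_set_val; exact: skel_Gajer_avoids_stratum ss v.
Qed.

End SingularStratumComplement.

Theorem mainTheorem12 (X : topologicalType) (n : nat) (F : nat -> set X)
  (p : set X -> eint) (x : X) (i : nat) :
  filtered_space n F -> perversity n F p ->
  (i < n)%N -> is_stratum_at n F i [set x] ->
  let U := [set y : X | y <> x] in
  skel_iso (Gajer n F p)
           (Gajer n (induced_filt U F) (induced_perv n F U p))
           (eadd (dual_perv_at n p i [set x]) (EIFin 1)).
Proof.
move=> hF _ hi hx U.
exact: skel_iso_Gajer_setC_stratum hF hi hx.
Qed.
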